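(* Let $\phi$ be a PDL formula in negation normal form, and let $T$ be an expanded tableau whose root is $r=(\{\phi\} :: [\,],\bot,\emptyset,\emptyset :: \mathrm{stat},\mathrm{uev})$, with $\mathrm{stat}$ and $\mathrm{uev}$ determined from the children of $r$ by the rules. If $r$ is open (i.e. $\mathrm{stat}_r=\mathbf{open}$), then there exists a Hintikka structure for $\phi$.
   Context: Syntax of PDL. Fix disjoint countably infinite sets $\mathrm{AFml}$ (propositional atoms $p,q,\dots$) and $\mathrm{APrg}$ (atomic programs $a,b,\dots$). Formulae and programs are defined by mutual induction. Every atom is a formula and every atomic program is a program. If $\varphi,\psi$ are formulae, then $\neg\varphi$, $\varphi\wedge\psi$, $\varphi\vee\psi$ are formulae and $\varphi?$ is a program. If $\varphi$ is a formula and $\alpha$ a program, then $\langle\alpha\rangle\varphi$ and $[\alpha]\varphi$ are formulae. If $\alpha,\beta$ are programs, then $\alpha;\beta$, $\alpha\cup\beta$ and $\alpha^*$ are programs. A $\langle\rangle$-formula is any $\langle\alpha\rangle\varphi$. It is a non-atomic diamond formula if $\alpha\notin\mathrm{APrg}$. A $\langle{*}\rangle$-formula is any $\langle\alpha^*\rangle\varphi$. NNF means $\neg$ occurs only directly in front of atoms. $\mathrm{nnf}(\varphi)$ is the equivalent NNF formula obtained by pushing negations inward, and ${\sim}\varphi:=\mathrm{nnf}(\neg\varphi)$. Let $\mathrm{ppre}(\varphi):=\{\langle\alpha_1\rangle\cdots\langle\alpha_k\rangle\varphi: k\ge0,\ \alpha_i \text{ programs}\}$. Hintikka structures. - A structure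 $(W,R,L)$ for $\phi$ consists of a nonempty set $W$, a relation $R_a\subseteq W\times W$ for each $a\in\mathrm{APrg}$, and a labelling $L:W\to 2^{\mathrm{Fml}}$ with $\phi\in L(v)$ for some $v\in W$. - The relation $\leadsto$ is defined by: $\langle\alpha;\beta\rangle\chi\leadsto\langle\alpha\rangle\langle\beta\rangle\chi$; $\langle\alpha\cup\beta\rangle\chi\leadsto\langle\alpha\rangle\chi$ and $\langle\alpha\cup\beta\rangle\chi\leadsto\langle\beta\rangle\chi$; $\langle\alpha^*\rangle\chi\leadsto\chi$ and $\langle\alpha^*\rangle\chi\leadsto\langle\alpha\rangle\langle\alpha^*\rangle\chi$; $\langle\theta?\rangle\chi\leadsto\chi$; and nothing else. - A fulfilling chain for $(\varphi,\beta,w)$ in $H=(W,R,L)$ is a sequence $(w_0,\psi_0),\dots,(w_n,\psi_n)$, $n\ge0$, such that: - each $w_i\in W$, each $\psi_i\in\mathrm{ppre}(\varphi)$, and $\psi_i\in L(w_i)$; - $w_0=w$, $\psi_0=\langle\beta\rangle\varphi$, $\psi_n=\varphi$, and $\psi_i\ne\varphi$ for $i<n$; - for $i<n$: if $\psi_i=\langle a\rangle\chi$ with $a\in\mathrm{APrg}$, then $\psi_{i+1}=\chi$ and $(w_i,w_{i+1})\in R_a$; otherwise $\psi_i\leadsto\psi_{i+1}$ and $w_i=w_{i+1}$. - $\alpha$-formulae with components $(\alpha_1;\alpha_2)$ are: $\varphi\wedge\psi:(\varphi;\psi)$; $[\alpha\cup\beta]\varphi:([\alpha]\varphi;[\beta]\varphi)$;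 $[\alpha^*]\varphi:(\varphi;[\alpha][\alpha^*]\varphi)$; $\langle\psi?\rangle\varphi:(\varphi;\psi)$; $\langle\alpha;\beta\rangle\varphi:(\langle\alpha\rangle\langle\beta\rangle\varphi;\text{none})$; $[\alpha;\beta]\varphi:([\alpha][\beta]\varphi;\text{none})$. - $\beta$-formulae with components $(\beta_1;\beta_2)$ are: $\varphi\vee\psi:(\varphi;\psi)$; $\langle\alpha\cup\beta\rangle\varphi:(\langle\alpha\rangle\varphi;\langle\beta\rangle\varphi)$; $\langle\alpha^*\rangle\varphi:(\varphi;\langle\alpha\rangle\langle\alpha^*\rangle\varphi)$; $[\psi?]\varphi:(\varphi;{\sim}\psi)$. - A Hintikka structure for $\phi$ is a structure for $\phi$ such that for all $w\in W$: - (H1) $\neg p\in L(w)\Rightarrow p\notin L(w)$; - (H2) if an $\alpha$-formula is in $L(w)$ then its component(s) are in $L(w)$; - (H3) if a $\beta$-formula is in $L(w)$ then $\beta_1\in L(w)$ or $\beta_2\in L(w)$; - (H4) $\langle a\rangle\varphi\in L(w)\Rightarrow$ there is $v$ with $(w,v)\in R_a$ and $\varphi\in L(v)$; - (H5) $[a]\varphi\in L(w)\Rightarrow\varphi\in L(v)$ for all $v$ with $(w,v)\in R_a$; - (H6) $\langle\alpha^*\rangle\varphi\in L(w)\Rightarrow$ there is a fulfilling chain for $(\varphi,\alpha^*,w)$ in $H$. Tableau nodes. A node has the form $(\Gamma :: \mathrm{HCr},\mathrm{Nx},\mathrm{BD},\mathrm{BB} :: \mathrm{stat},\mathrm{uev})$,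 where: - $\Gamma$ is a finite set of formulae; - $\mathrm{HCr}$ is a finite list of pairs $(\varphi,\Delta)$ with $\varphi\in\Delta$, with length $\mathrm{len}(\mathrm{HCr})$, $j$-th entry $\mathrm{HCr}[j]$, and concatenation $@$; - $\mathrm{Nx}$ is $\bot$ or a formula; - $\mathrm{BD},\mathrm{BB}$ are sets of formulae; - $\mathrm{stat}\in\{\mathbf{unsat},\mathbf{open},\mathbf{barred}\}$; - $\mathrm{uev}$ is a partial function from pairs ($\langle\rangle$-formula, $\langle{*}\rangle$-formula) to positive integers ($\bot$ = undefined). Auxiliary functions: - $\mathrm{uev}_\bot$ is everywhere undefined. - $\mathrm{tst}(\chi)=\chi$ if $\chi$ is a non-atomic diamond formula, else $\bot$. - $\mathrm{bl}(\chi,\Gamma)=\Gamma$ if $\chi$ is a non-atomic diamond formula, else $\emptyset$. - $\min_\bot(f,g)(\chi_1,\chi_2)$ is undefined if either value is undefined, else the minimum. Rules. The premise set is the displayed principal formula disjointly united with $\Gamma$. Unmentioned histories are copied from parent to children; one-child rules copy the child's $\mathrm{stat}$ to the parent. Terminal rules: - (id): applicable if $\{p,\neg p\}\subseteq\Gamma$; set $\mathrm{stat}:=\mathbf{unsat}$ and $\mathrm{uev}:=\mathrm{uev}_\bot$. - ($\langle*\rangle_2$): premise $\langle\alpha^*\rangle\varphi,\Gamma$ with $\mathrm{Nx}\in\{\bot,\langle\alpha^*\rangle\varphi\}$ and $\langle\alpha^*\rangle\varphi\in\mathrm{BD}$; set $\mathrm{stat}:=\mathbf{barred}$ and $\mathrm{uev}:=\mathrm{uev}_\bot$.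 Linear rules with $\mathrm{Nx}=\bot$, in each of which $\mathrm{uev}(\chi_1,\chi_2)=\mathrm{uev}_1(\chi_1,\chi_2)$ if $\chi_1\in\Gamma$, else $\bot$: - ($\wedge$): $\varphi\wedge\psi,\Gamma$ has the child $\{\varphi,\psi\}\cup\Gamma$; - ($[\cup]$): $[\alpha\cup\beta]\varphi,\Gamma$ has the child $\{[\alpha]\varphi,[\beta]\varphi\}\cup\Gamma$; - ($[;]$): $[\alpha;\beta]\varphi,\Gamma$ has the child $\{[\alpha][\beta]\varphi\}\cup\Gamma$; - ($[*]$): $[\alpha^*]\varphi,\Gamma$ has a child with set $\Gamma$ if $[\alpha^*]\varphi\in\mathrm{BB}$ and $\{\varphi,[\alpha][\alpha^*]\varphi\}\cup\Gamma$ otherwise, and $\mathrm{BB}_1=\{[\alpha^*]\varphi\}\cup\mathrm{BB}$. Further linear rules: - ($\langle;\rangle$): premise $\langle\alpha;\beta\rangle\varphi,\Gamma$ with $\mathrm{Nx}\in\{\bot,\langle\alpha;\beta\rangle\varphi\}$. The child is $\{\langle\alpha\rangle\langle\beta\rangle\varphi\}\cup\Gamma$ with $\mathrm{Nx}_1=\mathrm{tst}(\langle\alpha\rangle\langle\beta\rangle\varphi)$ and $\mathrm{BD}_1=\mathrm{bl}(\langle\alpha\rangle\langle\beta\rangle\varphi,\mathrm{BD})$. Set $\mathrm{uev}(\chi_1,\chi_2)$ to be $\mathrm{uev}_1(\langle\alpha\rangle\langle\beta\rangle\varphi,\chi_2)$ if $\chi_1$ is the principal formula; $\mathrm{uev}_1(\chi_1,\chi_2)$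 if $\chi_1\in\Gamma$; and $\bot$ otherwise. - ($\langle?\rangle$): premise $\langle\psi?\rangle\varphi,\Gamma$ with $\mathrm{Nx}\in\{\bot,\langle\psi?\rangle\varphi\}$. The child is $\{\psi,\varphi\}\cup\Gamma$ with $\mathrm{Nx}_1=\mathrm{tst}(\varphi)$ and $\mathrm{BD}_1=\mathrm{bl}(\varphi,\mathrm{BD})$. Set $\mathrm{uev}(\chi_1,\chi_2)$ to be $\mathrm{uev}_1(\varphi,\chi_2)$ if $\chi_1$ is the principal formula; $\mathrm{uev}_1(\chi_1,\chi_2)$ if $\chi_1\in\Gamma$; and $\bot$ otherwise. Branching rules ($i=1,2$): - ($\vee$): premise $\varphi_1\vee\varphi_2,\Gamma$ with $\mathrm{Nx}=\bot$; children $\{\varphi_i\}\cup\Gamma$. - ($[?]$): premise $[\psi?]\varphi,\Gamma$ with $\mathrm{Nx}=\bot$; children $\{{\sim}\psi\}\cup\Gamma$ and $\{\varphi\}\cup\Gamma$. - For both of these, $\mathrm{uev}'_i(\chi_1,\chi_2)=\mathrm{uev}_i(\chi_1,\chi_2)$ if $\chi_1\in\Gamma$, else $\bot$. - ($\langle\cup\rangle$): premise $\langle\alpha_1\cup\alpha_2\rangle\varphi,\Gamma$ with $\mathrm{Nx}\in\{\bot,\text{principal formula}\}$. The children are $\{\langle\alpha_i\rangle\varphi\}\cup\Gamma$ with $\mathrm{Nx}_i=\mathrm{tst}(\langle\alpha_i\rangle\varphi)$ and $\mathrm{BD}_i=\mathrm{bl}(\langle\alpha_i\rangle\varphi,\mathrm{BD})$.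 Set $\mathrm{uev}'_i(\chi_1,\chi_2)$ to be $\mathrm{uev}_i(\langle\alpha_i\rangle\varphi,\chi_2)$ if $\chi_1$ is the principal formula; $\mathrm{uev}_i(\chi_1,\chi_2)$ if $\chi_1\in\Gamma$; and $\bot$ otherwise. - ($\langle*\rangle_1$): premise $\langle\alpha^*\rangle\varphi,\Gamma$ with $\mathrm{Nx}\in\{\bot,\langle\alpha^*\rangle\varphi\}$ and $\langle\alpha^*\rangle\varphi\notin\mathrm{BD}$. - Child 1 is $\{\varphi\}\cup\Gamma$ with $\mathrm{Nx}_1=\mathrm{tst}(\varphi)$ and $\mathrm{BD}_1=\mathrm{bl}(\varphi,\{\langle\alpha^*\rangle\varphi\}\cup\mathrm{BD})$. - Child 2 is $\{\langle\alpha\rangle\langle\alpha^*\rangle\varphi\}\cup\Gamma$ with $\mathrm{Nx}_2=\mathrm{tst}(\langle\alpha\rangle\langle\alpha^*\rangle\varphi)$ and $\mathrm{BD}_2=\mathrm{bl}(\langle\alpha\rangle\langle\alpha^*\rangle\varphi,\{\langle\alpha^*\rangle\varphi\}\cup\mathrm{BD})$. - $\mathrm{uev}'_1(\chi_1,\chi_2)$ is $\bot$ if $\chi_1=\chi_2=\langle\alpha^*\rangle\varphi$; $\mathrm{uev}_1(\varphi,\chi_2)$ if $\chi_1=\langle\alpha^*\rangle\varphi\ne\chi_2$; $\mathrm{uev}_1(\chi_1,\chi_2)$ if $\chi_1\in\Gamma$; and $\bot$ otherwise. - $\mathrm{uev}'_2(\chi_1,\chi_2)$ is $\mathrm{uev}_2(\langle\alpha\rangle\langle\alpha^*\rangle\varphi,\chi_2)$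 if $\chi_1=\langle\alpha^*\rangle\varphi$; $\mathrm{uev}_2(\chi_1,\chi_2)$ if $\chi_1\in\Gamma$; and $\bot$ otherwise. For all branching rules, the parent's variables are computed as follows. - $\mathrm{stat}=\mathbf{unsat}$ if both children are $\mathbf{unsat}$; $\mathbf{open}$ if some child is $\mathbf{open}$; and $\mathbf{barred}$ otherwise. - $\mathrm{uev}=\mathrm{uev}_\bot$ if $\mathrm{stat}\ne\mathbf{open}$. - Otherwise $\mathrm{uev}=\mathrm{uev}'_i$ if only child $i$ is open, and $\min_\bot(\mathrm{uev}'_1,\mathrm{uev}'_2)$ if both are open. Existential rule ($\langle\rangle$). The premise set is $\{\langle a_1\rangle\varphi_1,\dots,\langle a_{n+m}\rangle\varphi_{n+m}\}\uplus[-]\Delta\uplus\Gamma$, $n+m\ge0$, subject to the following conditions. - Each $a_i\in\mathrm{APrg}$. - $\Gamma$ consists only of atoms and negated atoms, with no $\{p,\neg p\}\subseteq\Gamma$. - $[-]\Delta$ consists only of formulae $[a]\psi$ with $a\in\mathrm{APrg}$. - Let $\Delta_i=\{\psi:[a_i]\psi\in[-]\Delta\}$. For $i\le n$, the pair $(\varphi_i,\{\varphi_i\}\cup\Delta_i)$ is not an entry of $\mathrm{HCr}$. For $n<k\le n+m$, $(\varphi_k,\{\varphi_k\}\cup\Delta_k)=\mathrm{HCr}[j]$ for some $j$. The children, for $i\le n$, are $\{\varphi_i\}\cup\Delta_i$ with $\mathrm{HCr}_i=\mathrm{HCr}\,@\,[(\varphi_i,\{\varphi_i\}\cup\Delta_i)]$,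 $\mathrm{Nx}_i=\mathrm{tst}(\varphi_i)$ and $\mathrm{BD}_i=\mathrm{BB}_i=\emptyset$. The parent's variables are computed as follows. - $\mathrm{stat}=\mathbf{unsat}$ if some $i\le n$ has $\mathrm{stat}_i\ne\mathbf{open}$, or there exist $i\le n$ and a $\langle{*}\rangle$-formula $\psi$ with $\varphi_i\in\mathrm{ppre}(\psi)$ and $\mathrm{uev}_i(\varphi_i,\psi)$ defined and $>\mathrm{len}(\mathrm{HCr})$. Otherwise $\mathrm{stat}=\mathbf{open}$. - For $n<k\le n+m$, $\mathrm{uev}_k$ is constantly $j$, where $\mathrm{HCr}[j]=(\varphi_k,\{\varphi_k\}\cup\Delta_k)$. - $\mathrm{uev}(\chi_1,\chi_2)=\mathrm{uev}_i(\varphi_i,\chi_2)$ if $\mathrm{stat}=\mathbf{open}$, $\chi_2$ is a $\langle{*}\rangle$-formula, $\chi_1\in\mathrm{ppre}(\chi_2)$ and $\chi_1=\langle a_i\rangle\varphi_i$ for some $i\le n+m$. Otherwise $\mathrm{uev}(\chi_1,\chi_2)=\bot$. Tableau. A tableau is a tree of nodes in which the children of each node come from a single application of one applicable rule (free choice), and each parent's $\mathrm{stat}$ and $\mathrm{uev}$ are computed from its children. It is expanded if no rule can be applied to any leaf. *)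

From Stdlib Require Import List Arith.
Import ListNotations.

Inductive fml : Type :=
| Atom : nat -> fml
| Neg : fml -> fml
| Conj : fml -> fml -> fml
| Disj : fml -> fml -> fml
| Dia : prg -> fml -> fml
| Box : prg -> fml -> fml
with prg : Type :=
| AP : nat -> prg
| Test : fml -> prg
| Seq : prg -> prg -> prg
| Choice : prg -> prg -> prg
| Star : prg -> prg.

Fixpoint is_nnf (f : fml) : Prop :=
  match f with
  | Atom _ => True
  | Neg (Atom _) => True
  | Neg _ => False
  | Conj g h | Disj g h => is_nnf g /\ is_nnf h
  | Dia a g | Box a g => is_nnf_prg a /\ is_nnf g
  end
with is_nnf_prg (a : prg) : Prop :=
  match a with
  | AP _ => True
  | Test g => is_nnf g
  | Seq b c | Choice b c => is_nnf_prg b /\ is_nnf_prg c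
  | Star b => is_nnf_prg b
  end.

Fixpoint nnf (f : fml) : fml :=
  match f with
  | Atom p => Atom p
  | Neg g => nneg g
  | Conj g h => Conj (nnf g) (nnf h)
  | Disj g h => Disj (nnf g) (nnf h)
  | Dia a g => Dia (nnf_prg a) (nnf g)
  | Box a g => Box (nnf_prg a) (nnf g)
  end
with nneg (f : fml) : fml :=
  match f with
  | Atom p => Neg (Atom p)
  | Neg g => nnf g
  | Conj g h => Disj (nneg g) (nneg h)
  | Disj g h => Conj (nneg g) (nneg h)
  | Dia a g => Box (nnf_prg a) (nneg g)
  | Box a g => Dia (nnf_prg a) (nneg g)
  end
with nnf_prg (a : prg) : prg :=
  match a with
  | AP b => AP b
  | Test g => Test (nnf g)
  | Seq b c => Seq (nnf_prg b) (nnf_prg c)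
  | Choice b c => Choice (nnf_prg b) (nnf_prg c)
  | Star b => Star (nnf_prg b)
  end.

Definition sim (f : fml) : fml := nnf (Neg f).

Inductive ppre (phi : fml) : fml -> Prop :=
| ppre_base : ppre phi phi
| ppre_step a psi : ppre phi psi -> ppre phi (Dia a psi).

Definition nadia (x : fml) : bool :=
  match x with Dia (AP _) _ => false | Dia _ _ => true | _ => false end.
Definition star_dia (x : fml) : bool :=
  match x with Dia (Star _) _ => true | _ => false end.
Definition atomic_dia (x : fml) : bool :=
  match x with Dia (AP _) _ => true | _ => false end.

Inductive leadsto : fml -> fml -> Prop :=
| lt_seq a b c : leadsto (Dia (Seq a b) c) (Dia a (Dia b c))
| lt_ch1 a b c : leadsto (Dia (Choice a b) c) (Dia a c)
| lt_ch2 a b c : leadsto (Dia (Choice a b) c) (Dia b c)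
| lt_star0 a c : leadsto (Dia (Star a) c) c
| lt_star1 a c : leadsto (Dia (Star a) c) (Dia a (Dia (Star a) c))
| lt_test t c : leadsto (Dia (Test t) c) c.

Definition fulfilling_chain {W : Type} (R : nat -> W -> W -> Prop)
    (L : W -> fml -> Prop) (phi : fml) (b : prg) (w : W) : Prop :=
  exists (len : nat) (ws : nat -> W) (ps : nat -> fml),
    (forall i, i <= len -> ppre phi (ps i) /\ L (ws i) (ps i)) /\
    ws 0 = w /\ ps 0 = Dia b phi /\ ps len = phi /\
    (forall i, i < len -> ps i <> phi) /\
    (forall i, i < len ->
       match ps i with
       | Dia (AP a) chi => ps (S i) = chi /\ R a (ws i) (ws (S i))
       | _ => leadsto (ps i) (ps (S i)) /\ ws i = ws (S i)
       end).

Definition hintikka {W : Type} (R : nat -> W -> W -> Prop)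
    (L : W -> fml -> Prop) : Prop :=
  forall w : W,
    (* H1 *)
    (forall p, L w (Neg (Atom p)) -> ~ L w (Atom p)) /\
    (* H2: alpha-formulae *)
    (forall f g, L w (Conj f g) -> L w f /\ L w g) /\
    (forall a b f, L w (Box (Choice a b) f) -> L w (Box a f) /\ L w (Box b f)) /\
    (forall a f, L w (Box (Star a) f) -> L w f /\ L w (Box a (Box (Star a) f))) /\
    (forall psi f, L w (Dia (Test psi) f) -> L w f /\ L w psi) /\
    (forall a b f, L w (Dia (Seq a b) f) -> L w (Dia a (Dia b f))) /\
    (forall a b f, L w (Box (Seq a b) f) -> L w (Box a (Box b f))) /\
    (* H3: beta-formulae *)
    (forall f g, L w (Disj f g) -> L w f \/ L w g) /\
    (forall a b f, L w (Dia (Choice a b) f) -> L w (Dia a f) \/ L w (Dia b f)) /\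
    (forall a f, L w (Dia (Star a) f) -> L w f \/ L w (Dia a (Dia (Star a) f))) /\
    (forall psi f, L w (Box (Test psi) f) -> L w f \/ L w (sim psi)) /\
    (* H4 *)
    (forall a f, L w (Dia (AP a) f) -> exists v, R a w v /\ L v f) /\
    (* H5 *)
    (forall a f, L w (Box (AP a) f) -> forall v, R a w v -> L v f) /\
    (* H6 *)
    (forall a f, L w (Dia (Star a) f) -> fulfilling_chain R L f (Star a) w).

Definition hintikka_structure_for (phi : fml) : Prop :=
  exists (W : Type) (R : nat -> W -> W -> Prop) (L : W -> fml -> Prop),
    (exists v, L v phi) /\ hintikka R L.

(* (finite) sets of formulae are represented extensionally as predicates *)
Definition fset := fml -> Prop.
Definition seteq (A B : fset) : Prop := forall x, A x <-> B x.
Definition emptyset : fset := fun _ => False.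
Definition add (x : fml) (G : fset) : fset := fun y => y = x \/ G y.
Definition rest (G : fset) (chi : fml) : fset := fun y => G y /\ y <> chi.

Inductive status := Unsat | Open | Barred.

Record node := mkNode {
  Gam : fset;
  HCr : list (fml * fset);
  Nx : option fml;            (* None = bottom *)
  BD : fset;
  BB : fset;
  stat : status;
  uev : fml -> fml -> option nat  (* None = undefined *)
}.

(* HCr[j], 1-based *)
Definition hcr_at (H : list (fml * fset)) (j : nat) (e : fml * fset) : Prop :=
  1 <= j /\ nth_error H (j - 1) = Some e.
Definition in_hcr (H : list (fml * fset)) (f : fml) (D : fset) : Prop :=
  exists j e, hcr_at H j e /\ fst e = f /\ seteq (snd e) D.

Definition tst (x : fml) : option fml := if nadia x then Some x else None.
Definition bl (x : fml) (G : fset) : fset := fun y => nadia x = true /\ G y.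
Definition nx_ok (n : node) (chi : fml) : Prop := Nx n = None \/ Nx n = Some chi.

Definition min_bot (a b : option nat) : option nat :=
  match a, b with Some x, Some y => Some (Nat.min x y) | _, _ => None end.

Definition branch_stat (s1 s2 : status) : status :=
  match s1, s2 with
  | Unsat, Unsat => Unsat
  | Open, _ => Open
  | _, Open => Open
  | _, _ => Barred
  end.

Definition branch_uev (s1 s2 : status) (v1 v2 : option nat) : option nat :=
  match s1, s2 with
  | Open, Open => min_bot v1 v2
  | Open, _ => v1
  | _, Open => v2
  | _, _ => None
  end.

(* relational specs "v = uev'(x,y)" *)
Definition gam_uev (G : fset) (u : fml -> fml -> option nat) (x y : fml)
    (v : option nat) : Prop :=
  (G x -> v = u x y) /\ (~ G x -> v = None).
Definition pr_uev (chi newf : fml) (G : fset) (u : fml -> fml -> option nat)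
    (x y : fml) (v : option nat) : Prop :=
  (x = chi -> v = u newf y) /\ (G x -> v = u x y) /\
  (x <> chi -> ~ G x -> v = None).
Definition star1_uev (chi f : fml) (G : fset) (u : fml -> fml -> option nat)
    (x y : fml) (v : option nat) : Prop :=
  (x = chi -> y = chi -> v = None) /\
  (x = chi -> y <> chi -> v = u f y) /\
  (G x -> v = u x y) /\
  (x <> chi -> ~ G x -> v = None).

Definition plain_child (n c : node) (S : fset) : Prop :=
  seteq (Gam c) S /\ HCr c = HCr n /\ Nx c = Nx n /\
  seteq (BD c) (BD n) /\ seteq (BB c) (BB n).
Definition dia_child (n c : node) (S : fset) (key : fml) (bd : fset) : Prop :=
  seteq (Gam c) S /\ HCr c = HCr n /\ Nx c = tst key /\
  seteq (BD c) (bl key bd) /\ seteq (BB c) (BB n).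

Definition lit_or_modal (x : fml) : Prop :=
  match x with
  | Atom _ => True
  | Neg (Atom _) => True
  | Dia (AP _) _ => True
  | Box (AP _) _ => True
  | _ => False
  end.
Definition succ_set (n : node) (a : nat) (f : fml) : fset :=
  fun x => x = f \/ Gam n (Box (AP a) x).

Definition dia_bad (n : node) (kids : list ((nat * fml) * node)) : Prop :=
  (exists k c, In (k, c) kids /\ stat c <> Open) \/
  (exists a f c psi v, In ((a, f), c) kids /\ star_dia psi = true /\
     ppre psi f /\ uev c f psi = Some v /\ v > length (HCr n)).

Definition dia_uev (n : node) (kids : list ((nat * fml) * node)) (x y : fml) : Prop :=
  (stat n = Open -> star_dia y = true -> ppre y x ->
    (forall a f c, In ((a, f), c) kids -> x = Dia (AP a) f -> uev n x y = uev c f y) /\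
    (forall a f, Gam n (Dia (AP a) f) -> in_hcr (HCr n) f (succ_set n a f) ->
       x = Dia (AP a) f ->
       exists j e, hcr_at (HCr n) j e /\ fst e = f /\
         seteq (snd e) (succ_set n a f) /\ uev n x y = Some j)) /\
  (~ (stat n = Open /\ star_dia y = true /\ ppre y x /\ Gam n x /\
      atomic_dia x = true) -> uev n x y = None).

(* Tab n : n is the root of a (finite) expanded tableau in which every
   node's stat and uev are computed from its children by the rules. *)
Inductive Tab : node -> Prop :=
| T_id (n : node) (p : nat) :
    Gam n (Atom p) -> Gam n (Neg (Atom p)) ->
    stat n = Unsat -> (forall x y, uev n x y = None) -> Tab n
| T_star2 (n : node) (a : prg) (f : fml) :
    Gam n (Dia (Star a) f) -> nx_ok n (Dia (Star a) f) -> BD n (Dia (Star a) f) ->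
    stat n = Barred -> (forall x y, uev n x y = None) -> Tab n
| T_and (n c : node) (f g : fml) :
    Gam n (Conj f g) -> Nx n = None ->
    plain_child n c (add f (add g (rest (Gam n) (Conj f g)))) ->
    Tab c -> stat n = stat c ->
    (forall x y, gam_uev (rest (Gam n) (Conj f g)) (uev c) x y (uev n x y)) ->
    Tab n
| T_boxch (n c : node) (a b : prg) (f : fml) :
    Gam n (Box (Choice a b) f) -> Nx n = None ->
    plain_child n c (add (Box a f) (add (Box b f) (rest (Gam n) (Box (Choice a b) f)))) ->
    Tab c -> stat n = stat c ->
    (forall x y, gam_uev (rest (Gam n) (Box (Choice a b) f)) (uev c) x y (uev n x y)) ->
    Tab n
| T_boxseq (n c : node) (a b : prg) (f : fml) :
    Gam n (Box (Seq a b) f) -> Nx n = None ->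
    plain_child n c (add (Box a (Box b f)) (rest (Gam n) (Box (Seq a b) f))) ->
    Tab c -> stat n = stat c ->
    (forall x y, gam_uev (rest (Gam n) (Box (Seq a b) f)) (uev c) x y (uev n x y)) ->
    Tab n
| T_boxstar (n c : node) (a : prg) (f : fml) :
    Gam n (Box (Star a) f) -> Nx n = None ->
    (BB n (Box (Star a) f) -> seteq (Gam c) (rest (Gam n) (Box (Star a) f))) ->
    (~ BB n (Box (Star a) f) ->
       seteq (Gam c) (add f (add (Box a (Box (Star a) f)) (rest (Gam n) (Box (Star a) f))))) ->
    HCr c = HCr n -> Nx c = Nx n -> seteq (BD c) (BD n) ->
    seteq (BB c) (add (Box (Star a) f) (BB n)) ->
    Tab c -> stat n = stat c ->
    (forall x y, gam_uev (rest (Gam n) (Box (Star a) f)) (uev c) x y (uev n x y)) ->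
    Tab n
| T_diaseq (n c : node) (a b : prg) (f : fml) :
    Gam n (Dia (Seq a b) f) -> nx_ok n (Dia (Seq a b) f) ->
    dia_child n c (add (Dia a (Dia b f)) (rest (Gam n) (Dia (Seq a b) f)))
      (Dia a (Dia b f)) (BD n) ->
    Tab c -> stat n = stat c ->
    (forall x y, pr_uev (Dia (Seq a b) f) (Dia a (Dia b f))
                   (rest (Gam n) (Dia (Seq a b) f)) (uev c) x y (uev n x y)) ->
    Tab n
| T_diatest (n c : node) (psi f : fml) :
    Gam n (Dia (Test psi) f) -> nx_ok n (Dia (Test psi) f) ->
    dia_child n c (add psi (add f (rest (Gam n) (Dia (Test psi) f)))) f (BD n) ->
    Tab c -> stat n = stat c ->
    (forall x y, pr_uev (Dia (Test psi) f) f
                   (rest (Gam n) (Dia (Test psi) f)) (uev c) x y (uev n x y)) ->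
    Tab n
| T_or (n c1 c2 : node) (f g : fml) :
    Gam n (Disj f g) -> Nx n = None ->
    plain_child n c1 (add f (rest (Gam n) (Disj f g))) ->
    plain_child n c2 (add g (rest (Gam n) (Disj f g))) ->
    Tab c1 -> Tab c2 ->
    stat n = branch_stat (stat c1) (stat c2) ->
    (forall x y, exists v1 v2,
        gam_uev (rest (Gam n) (Disj f g)) (uev c1) x y v1 /\
        gam_uev (rest (Gam n) (Disj f g)) (uev c2) x y v2 /\
        uev n x y = branch_uev (stat c1) (stat c2) v1 v2) ->
    Tab n
| T_boxtest (n c1 c2 : node) (psi f : fml) :
    Gam n (Box (Test psi) f) -> Nx n = None ->
    plain_child n c1 (add (sim psi) (rest (Gam n) (Box (Test psi) f))) ->
    plain_child n c2 (add f (rest (Gam n) (Box (Test psi) f))) ->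
    Tab c1 -> Tab c2 ->
    stat n = branch_stat (stat c1) (stat c2) ->
    (forall x y, exists v1 v2,
        gam_uev (rest (Gam n) (Box (Test psi) f)) (uev c1) x y v1 /\
        gam_uev (rest (Gam n) (Box (Test psi) f)) (uev c2) x y v2 /\
        uev n x y = branch_uev (stat c1) (stat c2) v1 v2) ->
    Tab n
| T_diach (n c1 c2 : node) (a1 a2 : prg) (f : fml) :
    Gam n (Dia (Choice a1 a2) f) -> nx_ok n (Dia (Choice a1 a2) f) ->
    dia_child n c1 (add (Dia a1 f) (rest (Gam n) (Dia (Choice a1 a2) f))) (Dia a1 f) (BD n) ->
    dia_child n c2 (add (Dia a2 f) (rest (Gam n) (Dia (Choice a1 a2) f))) (Dia a2 f) (BD n) ->
    Tab c1 -> Tab c2 ->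
    stat n = branch_stat (stat c1) (stat c2) ->
    (forall x y, exists v1 v2,
        pr_uev (Dia (Choice a1 a2) f) (Dia a1 f)
          (rest (Gam n) (Dia (Choice a1 a2) f)) (uev c1) x y v1 /\
        pr_uev (Dia (Choice a1 a2) f) (Dia a2 f)
          (rest (Gam n) (Dia (Choice a1 a2) f)) (uev c2) x y v2 /\
        uev n x y = branch_uev (stat c1) (stat c2) v1 v2) ->
    Tab n
| T_star1 (n c1 c2 : node) (a : prg) (f : fml) :
    Gam n (Dia (Star a) f) -> nx_ok n (Dia (Star a) f) -> ~ BD n (Dia (Star a) f) ->
    dia_child n c1 (add f (rest (Gam n) (Dia (Star a) f))) f
      (add (Dia (Star a) f) (BD n)) ->
    dia_child n c2 (add (Dia a (Dia (Star a) f)) (rest (Gam n) (Dia (Star a) f)))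
      (Dia a (Dia (Star a) f)) (add (Dia (Star a) f) (BD n)) ->
    Tab c1 -> Tab c2 ->
    stat n = branch_stat (stat c1) (stat c2) ->
    (forall x y, exists v1 v2,
        star1_uev (Dia (Star a) f) f (rest (Gam n) (Dia (Star a) f)) (uev c1) x y v1 /\
        pr_uev (Dia (Star a) f) (Dia a (Dia (Star a) f))
          (rest (Gam n) (Dia (Star a) f)) (uev c2) x y v2 /\
        uev n x y = branch_uev (stat c1) (stat c2) v1 v2) ->
    Tab n
| T_dia (n : node) (kids : list ((nat * fml) * node)) :
    (forall x, Gam n x -> lit_or_modal x) ->
    (forall p, ~ (Gam n (Atom p) /\ Gam n (Neg (Atom p)))) ->
    NoDup (map fst kids) ->
    (forall a f, In (a, f) (map fst kids) <->
       (Gam n (Dia (AP a) f) /\ ~ in_hcr (HCr n) f (succ_set n a f))) ->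
    (forall a f c, In ((a, f), c) kids -> Tab c) ->
    (forall a f c, In ((a, f), c) kids ->
       seteq (Gam c) (succ_set n a f) /\
       HCr c = HCr n ++ [(f, succ_set n a f)] /\
       Nx c = tst f /\ seteq (BD c) emptyset /\ seteq (BB c) emptyset) ->
    (dia_bad n kids -> stat n = Unsat) ->
    (~ dia_bad n kids -> stat n = Open) ->
    (forall x y, dia_uev n kids x y) ->
    Tab n.

From Stdlib Require Import List Arith Lia Classical.
Import ListNotations.

(* The worlds of the Hintikka structure are the branches of the open tableau: sequences of
   open nodes, each a child of its predecessor by a static rule, ending in an open node to
   which the existential rule applies.  A world is labelled by the union of the sets along
   it, and [R_a] relates two worlds when the bodies of all [[a]]-formulae of the first lie in
   the second.  Every non-literal formula on a branch is decomposed further down, which gives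
   H1-H3.  Every [<a>]-formula of the last node has either an open child or an open node
   recorded in the history, and both start further branches, which gives H4.  For H6, the
   value [uev] of an eventuality is an upper bound on the history position it is deferred
   to.  Each rule passes the eventuality on to an open child without increasing this value
   (a branching rule to a child attaining the minimum), and the node recorded at history
   position [j] has values below [j]; so induction on the bound, and inside it on the
   tableau, yields a fulfilling chain. *)

Fixpoint fml_size (f : fml) : nat :=
  match f with
  | Atom _ => 1
  | Neg g => S (fml_size g)
  | Conj g h | Disj g h => S (fml_size g + fml_size h)
  | Dia a g | Box a g => S (prg_size a + fml_size g)
  end
with prg_size (a : prg) : nat :=
  match a with
  | AP _ => 1
  | Test g => S (fml_size g)
  | Seq b c | Choice b c => S (prg_size b + prg_size c)
  | Star b => S (prg_size b)
  end.

Lemma ppre_size_le phi x : ppre phi x -> fml_size phi <= fml_size x.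
Proof. induction 1; simpl; lia. Qed.

Lemma ppre_trans a b c : ppre a b -> ppre b c -> ppre a c.
Proof. intros Hab Hbc; induction Hbc; auto using ppre. Qed.

Lemma ppre_Dia_inv phi a z : ppre phi (Dia a z) -> Dia a z = phi \/ ppre phi z.
Proof. inversion 1; auto. Qed.

Lemma ppre_Dia_shape a f x : ppre (Dia a f) x -> exists b y, x = Dia b y.
Proof. induction 1; eauto. Qed.

Lemma ppre_Star_body a f x : ppre (Dia (Star a) f) x -> ppre f x /\ x <> f.
Proof.
  intros Hx; split.
  - apply ppre_trans with (Dia (Star a) f); auto using ppre.
  - intros ->. apply ppre_size_le in Hx. simpl in Hx. lia.
Qed.

Lemma ppre_Star_lit_or_modal a f x : ppre (Dia (Star a) f) x -> lit_or_modal x ->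
  exists b chi, x = Dia (AP b) chi /\ ppre (Dia (Star a) f) chi.
Proof.
  intros Hx Hlit. destruct (ppre_Dia_shape _ _ _ Hx) as (b & y & ->).
  destruct b; simpl in Hlit; try contradiction.
  destruct (ppre_Dia_inv _ _ _ Hx) as [E|]; [discriminate|eauto].
Qed.

Lemma ppre_leadsto a f x y : ppre (Dia (Star a) f) x -> leadsto x y ->
  ppre (Dia (Star a) f) y \/ y = f.
Proof.
  intros Hx Hxy. destruct Hxy; try (left; constructor; exact Hx);
    destruct (ppre_Dia_inv _ _ _ Hx) as [E|Hy]; try discriminate; auto using ppre.
  injection E as _ ->; auto.
Qed.

(* [blocked] excuses a box-star formula that the [[*]]-rule drops without unfolding. *)
Definition expanded_in (G : fset) (blocked : Prop) (p : fml) : Prop :=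
  match p with
  | Conj f g => G f /\ G g
  | Disj f g => G f \/ G g
  | Box (Choice a b) f => G (Box a f) /\ G (Box b f)
  | Box (Seq a b) f => G (Box a (Box b f))
  | Box (Star a) f => blocked \/ (G f /\ G (Box a (Box (Star a) f)))
  | Box (Test q) f => G f \/ G (sim q)
  | Dia (Seq a b) f => G (Dia a (Dia b f))
  | Dia (Test q) f => G q /\ G f
  | Dia (Choice a b) f => G (Dia a f) \/ G (Dia b f)
  | Dia (Star a) f => G f \/ G (Dia a (Dia (Star a) f))
  | _ => False
  end.

Lemma expanded_in_mono G G' b b' p : (forall h, G h -> G' h) -> (b -> b') ->
  expanded_in G b p -> expanded_in G' b' p.
Proof.
  intros HG Hb; destruct p as [|? | | |q f|q f]; simpl; try destruct q; intuition.
Qed.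

Lemma lit_or_modal_not_expanded G b p : lit_or_modal p -> ~ expanded_in G b p.
Proof. destruct p as [|? | | |q f|q f]; simpl; try destruct q; tauto. Qed.

Definition is_boxstar (g : fml) : bool :=
  match g with Box (Star _) _ => true | _ => false end.

Definition decomposes (p : fml) (n c : node) : Prop :=
  HCr c = HCr n /\ Gam n p /\ expanded_in (Gam c) (BB n p) p /\
  (forall g, Gam n g -> g <> p -> Gam c g) /\
  (forall g, BB c g -> BB n g \/ (g = p /\ is_boxstar p = true)).

Lemma seteq_child_decomposes n c S p :
  seteq (Gam c) S -> HCr c = HCr n -> seteq (BB c) (BB n) -> Gam n p ->
  (forall g, rest (Gam n) p g -> S g) -> expanded_in S (BB n p) p -> decomposes p n c.
Proof.
  intros HG Hh HB Hp Hrest Hexp; repeat split; auto.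
  - apply (expanded_in_mono S _ (BB n p) (BB n p)); auto. intros h; apply HG.
  - intros g Hg Hne; apply HG, Hrest; split; auto.
  - intros g Hg; left; apply HB, Hg.
Qed.

Lemma plain_child_decomposes n c S p : plain_child n c S -> Gam n p ->
  (forall g, rest (Gam n) p g -> S g) -> expanded_in S (BB n p) p -> decomposes p n c.
Proof. intros (HG & Hh & _ & _ & HB); apply seteq_child_decomposes; auto. Qed.

Lemma dia_child_decomposes n c S p key bd : dia_child n c S key bd -> Gam n p ->
  (forall g, rest (Gam n) p g -> S g) -> expanded_in S (BB n p) p -> decomposes p n c.
Proof. intros (HG & Hh & _ & _ & HB); apply seteq_child_decomposes; auto. Qed.

Lemma boxstar_decomposes n c a f : Gam n (Box (Star a) f) ->
  (BB n (Box (Star a) f) -> seteq (Gam c) (rest (Gam n) (Box (Star a) f))) ->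
  (~ BB n (Box (Star a) f) ->
     seteq (Gam c) (add f (add (Box a (Box (Star a) f)) (rest (Gam n) (Box (Star a) f))))) ->
  HCr c = HCr n -> seteq (BB c) (add (Box (Star a) f) (BB n)) ->
  decomposes (Box (Star a) f) n c.
Proof.
  intros Hp Hblocked Hfree Hh HB; repeat split; auto.
  - destruct (classic (BB n (Box (Star a) f))) as [Hb|Hb]; simpl; [now left|right].
    split; apply (Hfree Hb); unfold add; firstorder.
  - intros g Hg Hne. destruct (classic (BB n (Box (Star a) f))) as [Hb|Hb].
    + apply (Hblocked Hb); split; auto.
    + apply (Hfree Hb); unfold add, rest; firstorder.
  - intros g Hg. apply HB in Hg as [->|]; auto.
Qed.

Definition rule_step (n c : node) : Prop :=
  Tab c /\ stat c = Open /\ exists p, decomposes p n c.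

Definition saturated (e : node) : Prop :=
  Tab e /\ stat e = Open /\ (forall x, Gam e x -> lit_or_modal x).

Inductive branch : node -> list node -> node -> Prop :=
| branch_end e : saturated e -> branch e [e] e
| branch_cons n c l e : rule_step n c -> branch c l e -> branch n (n :: l) e.

Lemma branch_head n l e : branch n l e -> In n l.
Proof. destruct 1; simpl; auto. Qed.

Lemma branch_last n l e : branch n l e -> exists l0, l = l0 ++ [e].
Proof.
  induction 1 as [|n c l e _ _ [l0 ->]]; [now exists [] | now exists (n :: l0)].
Qed.

Lemma branch_HCr n l e : branch n l e -> HCr e = HCr n.
Proof. induction 1 as [|n c l e (_ & _ & p & Hh & _) _ IH]; congruence. Qed.

Lemma branch_saturated n l e : branch n l e -> saturated e.
Proof. induction 1; auto. Qed.

Lemma branch_suffix n0 l e : branch n0 l e -> forall m, In m l ->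
  exists pre l', l = pre ++ l' /\ branch m l' e.
Proof.
  induction 1 as [e He|n c l e Hs Hb IH]; intros m Hm.
  - destruct Hm as [<-|[]]. exists [], [e]; split; [reflexivity | now constructor].
  - destruct Hm as [<-|Hm].
    + exists [], (n :: l); split; [reflexivity | econstructor; eauto].
    + destruct (IH m Hm) as (pre & l' & -> & Hb'). now exists (n :: pre), l'.
Qed.

Lemma saturated_no_rule_step e c : saturated e -> ~ rule_step e c.
Proof.
  intros (_ & _ & Hlit) (_ & _ & p & _ & Hp & Hexp & _).
  exact (lit_or_modal_not_expanded _ _ p (Hlit _ Hp) Hexp).
Qed.

Lemma branch_from_saturated e l e' : saturated e -> branch e l e' -> l = [e] /\ e' = e.
Proof.
  intros He Hb; inversion Hb; subst; auto.
  exfalso; eapply saturated_no_rule_step; eauto.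
Qed.

Lemma branch_expanded n l e : branch n l e -> forall g, Gam n g ->
  Gam e g \/ exists m c, In m l /\ In c l /\ Gam m g /\ expanded_in (Gam c) (BB m g) g.
Proof.
  induction 1 as [|n c l e (_ & _ & p & _ & Hp & Hexp & Hrest & _) Hb IH]; intros g Hg; auto.
  destruct (classic (g = p)) as [->|Hne].
  - right. exists n, c; repeat split; simpl; eauto using branch_head.
  - destruct (IH g (Hrest g Hg Hne)) as [|(m & c' & Hm & Hc' & Hmg & Hexp')]; auto.
    right; exists m, c'; simpl; auto.
Qed.

Definition on_path (l : list node) (g : fml) : Prop := exists n, In n l /\ Gam n g.

(* A box-star formula that the [[*]]-rule drops because it is in [BB] was unfolded
   earlier on the path. *)
Definition unfolded_on (l : list node) (g : fml) : Prop :=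
  match g with
  | Box (Star a) f => on_path l f /\ on_path l (Box a (Box (Star a) f))
  | _ => False
  end.

Lemma unfolded_on_cons n l g : unfolded_on l g -> unfolded_on (n :: l) g.
Proof.
  destruct g as [| | | | |q f]; simpl; auto; destruct q; simpl; auto.
  intros [(m & Hm & H1) (m' & Hm' & H2)]; split; [exists m | exists m']; simpl; auto.
Qed.

Lemma branch_BB n0 l e : branch n0 l e -> forall m g, In m l -> BB m g ->
  BB n0 g \/ unfolded_on l g.
Proof.
  induction 1 as [|n c l e (_ & _ & p & _ & _ & Hexp & _ & HB) Hb IH];
    intros m g Hm Hg; destruct Hm as [<-|Hm]; auto; [destruct Hm|].
  destruct (IH m g Hm Hg) as [Hc|Hc]; [|right; now apply unfolded_on_cons].
  destruct (HB g Hc) as [|[-> Hstar]]; auto.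
  destruct p as [| | | | |q f]; try discriminate; destruct q; try discriminate.
  destruct Hexp as [|[H1 H2]]; auto.
  right; split; exists c; split; simpl; eauto using branch_head.
Qed.

Definition bounded (N : nat) (o : option nat) : Prop := forall v, o = Some v -> v < N.

Definition hcr_sound (H : list (fml * fset)) : Prop :=
  forall j e, hcr_at H j e -> exists c, Tab c /\ stat c = Open /\
    seteq (Gam c) (snd e) /\ HCr c = firstn j H /\ (forall g, ~ BB c g) /\
    (forall psi, star_dia psi = true -> ppre psi (fst e) -> bounded j (uev c (fst e) psi)).

Lemma hcr_sound_nil : hcr_sound [].
Proof. intros j e [_ He]. destruct (j - 1); discriminate. Qed.

Lemma hcr_sound_firstn H j : hcr_sound H -> hcr_sound (firstn j H).
Proof.
  intros Hs i e [Hi He]. rewrite nth_error_firstn in He.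
  destruct (Nat.ltb_spec (i - 1) j); [|discriminate].
  destruct (Hs i e (conj Hi He)) as (c & Ht & Ho & Hg & Hh & Hb & Hu).
  exists c; do 3 (split; [assumption|]); split; [|auto].
  rewrite Hh, firstn_firstn. f_equal; lia.
Qed.

Lemma hcr_sound_snoc H e k : hcr_sound H -> Tab k -> stat k = Open ->
  seteq (Gam k) (snd e) -> HCr k = H ++ [e] -> (forall g, ~ BB k g) ->
  (forall psi, star_dia psi = true -> ppre psi (fst e) ->
     bounded (S (length H)) (uev k (fst e) psi)) ->
  hcr_sound (H ++ [e]).
Proof.
  intros Hs Hk Ho Hg Hh Hb Hu j e' [Hj He].
  destruct (Nat.ltb_spec (j - 1) (length H)).
  - rewrite nth_error_app1 in He by assumption.
    destruct (Hs j e' (conj Hj He)) as (c & Ht & Ho' & Hg' & Hh' & Hb' & Hu').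
    exists c; do 3 (split; [assumption|]); split; [|auto].
    rewrite firstn_app, Hh', (proj2 (Nat.sub_0_le j (length H))) by lia.
    now rewrite app_nil_r.
  - rewrite nth_error_app2 in He by assumption.
    destruct (j - 1 - length H) as [|[|]] eqn:E; simpl in He; try discriminate.
    injection He as <-. exists k; do 3 (split; [assumption|]); split; [|split; [auto|]].
    + rewrite firstn_all2; auto. rewrite length_app; simpl; lia.
    + intros psi Hpsi Hpre v Hv. specialize (Hu psi Hpsi Hpre v Hv). lia.
Qed.

Definition seed (c : node) : Prop :=
  Tab c /\ stat c = Open /\ (forall g, ~ BB c g) /\ hcr_sound (HCr c).

Lemma hcr_sound_seed H j e : hcr_sound H -> hcr_at H j e -> exists c, seed c /\
  seteq (Gam c) (snd e) /\
  (forall psi, star_dia psi = true -> ppre psi (fst e) -> bounded j (uev c (fst e) psi)).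
Proof.
  intros Hs Hj. destruct (Hs j e Hj) as (c & Ht & Ho & Hg & Hh & Hb & Hu).
  exists c; split; [|auto].
  repeat split; auto. rewrite Hh. now apply hcr_sound_firstn.
Qed.

(** * The model *)

Definition good_branch (l : list node) : Prop :=
  exists n0 e, branch n0 l e /\ (forall g, ~ BB n0 g) /\ hcr_sound (HCr n0).

Definition world := { l : list node | good_branch l }.
Definition label (w : world) (g : fml) : Prop := on_path (proj1_sig w) g.
Definition acc (a : nat) (w w' : world) : Prop :=
  forall g, label w (Box (AP a) g) -> label w' g.

Lemma world_eq (w1 w2 : world) : proj1_sig w1 = proj1_sig w2 -> w1 = w2.
Proof.
  destruct w1 as [l1 g1], w2 as [l2 g2]; simpl; intros ->.
  now rewrite (proof_irrelevance _ g1 g2).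
Qed.

Lemma label_expanded (w : world) g : label w g -> ~ lit_or_modal g ->
  expanded_in (label w) (unfolded_on (proj1_sig w) g) g.
Proof.
  intros (m & Hm & Hg) Hnl.
  destruct (proj2_sig w) as (n0 & e & Hb & Hbb & _).
  destruct (branch_suffix _ _ _ Hb m Hm) as (pre & l & Hw & Hb').
  destruct (branch_expanded _ _ _ Hb' g Hg) as [He|(m' & c & Hm' & Hc & Hm'g & Hexp)].
  - destruct (branch_saturated _ _ _ Hb') as (_ & _ & Hlit). now apply Hlit in He.
  - assert (Hsub : forall k, In k l -> In k (proj1_sig w))
      by (intros k Hk; rewrite Hw; apply in_or_app; auto).
    apply (expanded_in_mono (Gam c) _ (BB m' g)); auto.
    + intros h Hh. exists c; auto.
    + intros Hbm. destruct (branch_BB _ _ _ Hb m' g (Hsub _ Hm') Hbm) as [Hn0|]; auto.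
      now apply Hbb in Hn0.
Qed.

Lemma label_lit_or_modal_last (w : world) n0 e g : branch n0 (proj1_sig w) e ->
  label w g -> lit_or_modal g -> Gam e g.
Proof.
  intros Hb (m & Hm & Hg) Hlit.
  destruct (branch_suffix _ _ _ Hb m Hm) as (pre & l & _ & Hb').
  destruct (branch_expanded _ _ _ Hb' g Hg) as [|(m' & c & _ & _ & _ & Hexp)]; auto.
  now apply lit_or_modal_not_expanded in Hexp.
Qed.

Definition existential_rule (n : node) (kids : list ((nat * fml) * node)) : Prop :=
  (forall p, ~ (Gam n (Atom p) /\ Gam n (Neg (Atom p)))) /\
  (forall a f, In (a, f) (map fst kids) <->
     (Gam n (Dia (AP a) f) /\ ~ in_hcr (HCr n) f (succ_set n a f))) /\
  (forall a f c, In ((a, f), c) kids ->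
     Tab c /\ seteq (Gam c) (succ_set n a f) /\
     HCr c = HCr n ++ [(f, succ_set n a f)] /\ seteq (BB c) emptyset) /\
  (dia_bad n kids -> stat n = Unsat) /\
  (forall x y, dia_uev n kids x y).

Lemma saturated_existential_rule e : saturated e -> exists kids, existential_rule e kids.
Proof.
  intros (Ht & Ho & Hlit).
  destruct Ht as [| | | | | | | | | | | |e kids _ Hcl _ Hiff Hkt Hkp Hbad _ Hdu];
    try (exfalso; match goal with H : Gam _ ?x |- _ => exact (Hlit _ H) end).
  - congruence.
  - exists kids; split; [|split; [|split; [|split]]]; auto.
    intros a f c Hk. destruct (Hkp a f c Hk) as (Hg & Hh & _ & _ & HB); eauto.
Qed.

Lemma existential_successor e kids b chi : existential_rule e kids -> Gam e (Dia (AP b) chi) ->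
  (exists k, In ((b, chi), k) kids) \/ in_hcr (HCr e) chi (succ_set e b chi).
Proof.
  intros (_ & Hiff & _) Hx.
  destruct (classic (in_hcr (HCr e) chi (succ_set e b chi))) as [|Hnot]; auto.
  assert (Hin : In (b, chi) (map fst kids)) by (apply Hiff; auto).
  apply in_map_iff in Hin as [[[b' chi'] k] [E Hk]].
  simpl in E; injection E as -> ->; eauto.
Qed.

Lemma open_existential_kid e kids b chi k : stat e = Open -> existential_rule e kids ->
  In ((b, chi), k) kids ->
  Tab k /\ stat k = Open /\ seteq (Gam k) (succ_set e b chi) /\
  HCr k = HCr e ++ [(chi, succ_set e b chi)] /\ (forall g, ~ BB k g) /\
  (forall psi, star_dia psi = true -> ppre psi chi ->
     bounded (S (length (HCr e))) (uev k chi psi)).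
Proof.
  intros Ho (_ & _ & Hkid & Hbad & _) Hk.
  assert (Hgood : ~ dia_bad e kids) by (intro Hd; specialize (Hbad Hd); congruence).
  destruct (Hkid _ _ _ Hk) as (Ht & Hg & Hh & HB).
  split; [exact Ht|]. split.
  { apply NNPP; intro Hno. apply Hgood; left; exists (b, chi), k; auto. }
  do 2 (split; [assumption|]). split.
  { intros g Hg'. now apply HB in Hg'. }
  intros psi Hpsi Hpre v Hv. apply NNPP; intro Hno. apply Hgood; right.
  exists b, chi, k, psi, v; repeat split; auto; lia.
Qed.

Lemma open_existential_kid_seed e kids b chi k : stat e = Open -> existential_rule e kids ->
  hcr_sound (HCr e) -> In ((b, chi), k) kids ->
  seed k /\ seteq (Gam k) (succ_set e b chi).
Proof.
  intros Ho Hr Hs Hk.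
  destruct (open_existential_kid _ _ _ _ _ Ho Hr Hk) as (Ht & Hok & Hg & Hh & HB & Hu).
  split; [|exact Hg]. split; [exact Ht|]. split; [exact Hok|]. split; [exact HB|].
  rewrite Hh. now apply (hcr_sound_snoc _ _ k).
Qed.

Lemma saturated_successor_seed e b chi : saturated e -> hcr_sound (HCr e) ->
  Gam e (Dia (AP b) chi) -> exists k, seed k /\ forall g, succ_set e b chi g -> Gam k g.
Proof.
  intros He Hs Hx. pose proof He as (_ & Ho & _).
  destruct (saturated_existential_rule e He) as (kids & Hr).
  destruct (existential_successor _ _ _ _ Hr Hx) as [(k & Hk)|(j & e0 & Hj & _ & Hse)].
  - destruct (open_existential_kid_seed _ _ _ _ _ Ho Hr Hs Hk) as [Hk' Hg].
    exists k; split; auto. intros g; apply Hg.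
  - destruct (hcr_sound_seed _ _ _ Hs Hj) as (c & Hc & Hg & _).
    exists c; split; auto. intros g Hg'; apply Hg, Hse, Hg'.
Qed.

Lemma saturated_uev_bound a0 f0 e x : saturated e -> Gam e x ->
  ppre (Dia (Star a0) f0) x -> bounded (S (length (HCr e))) (uev e x (Dia (Star a0) f0)).
Proof.
  intros He Hx Hpp. pose proof He as (_ & Ho & Hlit).
  destruct (saturated_existential_rule e He) as (kids & Hr).
  destruct (ppre_Star_lit_or_modal _ _ _ Hpp (Hlit _ Hx)) as (b & chi & -> & Hpc).
  pose proof Hr as (_ & _ & _ & _ & Hdu).
  destruct (proj1 (Hdu (Dia (AP b) chi) (Dia (Star a0) f0)) Ho eq_refl Hpp) as [Hkid Hhist].
  destruct (existential_successor _ _ _ _ Hr Hx) as [(k & Hk)|Hin].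
  - rewrite (Hkid _ _ _ Hk eq_refl).
    destruct (open_existential_kid _ _ _ _ _ Ho Hr Hk) as (_ & _ & _ & _ & _ & Hu).
    auto.
  - destruct (Hhist b chi Hx Hin eq_refl) as (j & e0 & [_ Hj] & _ & _ & ->).
    intros v [= <-]. assert (j - 1 < length (HCr e)) by (apply nth_error_Some; congruence).
    lia.
Qed.

(** * Open tableau nodes make progress on eventualities *)

Definition tracks (a0 : prg) (f0 : fml) (N : nat) (c : node) (x : fml) : Prop :=
  (Gam c x /\ bounded N (uev c x (Dia (Star a0) f0))) \/
  exists y, leadsto x y /\ Gam c y /\
    (y = f0 \/ ppre (Dia (Star a0) f0) y /\ bounded N (uev c y (Dia (Star a0) f0))).

Definition open_progress (Q : node -> Prop) (n : node) : Prop :=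
  (exists c, rule_step n c /\ Q c) /\
  forall a0 f0 N x, Gam n x -> ppre (Dia (Star a0) f0) x ->
    bounded N (uev n x (Dia (Star a0) f0)) ->
    exists c, rule_step n c /\ Q c /\ tracks a0 f0 N c x.

Lemma tracks_side a0 f0 N n c p x v : decomposes p n c -> Gam n x -> x <> p ->
  (rest (Gam n) p x -> v = uev c x (Dia (Star a0) f0)) -> bounded N v ->
  tracks a0 f0 N c x.
Proof.
  intros (_ & _ & _ & Hrest & _) Hx Hne Hv Hb. left; split; auto.
  rewrite <- Hv; [exact Hb | split; auto].
Qed.

Lemma tracks_principal a0 f0 N c x y v : ppre (Dia (Star a0) f0) x -> leadsto x y ->
  Gam c y -> (y <> f0 -> v = uev c y (Dia (Star a0) f0)) -> bounded N v ->
  tracks a0 f0 N c x.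
Proof.
  intros Hpp Hxy Hy Hv Hb. right; exists y; repeat split; auto.
  destruct (classic (y = f0)) as [|Hne]; auto.
  destruct (ppre_leadsto _ _ _ _ Hpp Hxy) as [Hpy|]; [|contradiction].
  right; split; auto. rewrite <- Hv; auto.
Qed.

Lemma tracks_gam_uev a0 f0 N n c p x v : decomposes p n c -> (forall b y, p <> Dia b y) ->
  Gam n x -> ppre (Dia (Star a0) f0) x ->
  gam_uev (rest (Gam n) p) (uev c) x (Dia (Star a0) f0) v -> bounded N v ->
  tracks a0 f0 N c x.
Proof.
  intros Hd Hp Hx Hpp [Hv _]. apply (tracks_side _ _ _ n _ p); auto.
  intros ->. destruct (ppre_Dia_shape _ _ _ Hpp) as (b & y & E). exact (Hp b y E).
Qed.

Lemma tracks_pr_uev a0 f0 N n c chi y x v : decomposes chi n c -> leadsto chi y ->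
  Gam c y -> Gam n x -> ppre (Dia (Star a0) f0) x ->
  pr_uev chi y (rest (Gam n) chi) (uev c) x (Dia (Star a0) f0) v -> bounded N v ->
  tracks a0 f0 N c x.
Proof.
  intros Hd Hl Hy Hx Hpp (Hprinc & Hside & _).
  destruct (classic (x = chi)) as [->|Hne].
  - apply (tracks_principal _ _ _ _ _ y); auto.
  - apply (tracks_side _ _ _ n _ chi); auto.
Qed.

Lemma tracks_star1_uev a0 f0 N n c a f x v : decomposes (Dia (Star a) f) n c ->
  Gam c f -> Gam n x -> ppre (Dia (Star a0) f0) x ->
  star1_uev (Dia (Star a) f) f (rest (Gam n) (Dia (Star a) f)) (uev c) x
    (Dia (Star a0) f0) v -> bounded N v ->
  tracks a0 f0 N c x.
Proof.
  intros Hd Hf Hx Hpp (_ & Hprinc & Hside & _).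
  destruct (classic (x = Dia (Star a) f)) as [->|Hne].
  - apply (tracks_principal _ _ _ _ _ f); auto using leadsto.
    intros Hne; apply Hprinc; congruence.
  - apply (tracks_side _ _ _ n _ (Dia (Star a) f)); auto.
Qed.

Lemma branch_stat_open s1 s2 : branch_stat s1 s2 = Open -> s1 = Open \/ s2 = Open.
Proof. destruct s1, s2; simpl; auto; discriminate. Qed.

Lemma branch_open_bounded s1 s2 v1 v2 N : branch_stat s1 s2 = Open ->
  bounded N (branch_uev s1 s2 v1 v2) ->
  (s1 = Open /\ bounded N v1) \/ (s2 = Open /\ bounded N v2).
Proof.
  intros Hs Hb. destruct s1, s2; simpl in *; try discriminate; auto.
  destruct v1 as [n1|], v2 as [n2|]; simpl in Hb.
  - destruct (Nat.le_ge_cases n1 n2).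
    + left; split; auto; intros v [= <-]; apply Hb; f_equal; lia.
    + right; split; auto; intros v [= <-]; apply Hb; f_equal; lia.
  - right; split; auto; discriminate.
  - left; split; auto; discriminate.
  - left; split; auto; discriminate.
Qed.

Lemma open_progress_linear Q n c p : Tab c -> stat n = stat c -> stat n = Open -> Q c ->
  decomposes p n c ->
  (forall a0 f0 N x, Gam n x -> ppre (Dia (Star a0) f0) x ->
     bounded N (uev n x (Dia (Star a0) f0)) -> tracks a0 f0 N c x) ->
  open_progress Q n.
Proof.
  intros Ht Hst Ho HQ Hd Htr.
  assert (Hs : rule_step n c) by (repeat split; eauto; congruence).
  split; [now exists c|]. intros a0 f0 N x Hx Hpp Hb. exists c; auto.
Qed.

Lemma open_progress_branching Q n c1 c2 p : Tab c1 -> Tab c2 ->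
  stat n = branch_stat (stat c1) (stat c2) -> stat n = Open -> Q c1 -> Q c2 ->
  decomposes p n c1 -> decomposes p n c2 ->
  (forall a0 f0 N x, Gam n x -> ppre (Dia (Star a0) f0) x -> exists v1 v2,
     uev n x (Dia (Star a0) f0) = branch_uev (stat c1) (stat c2) v1 v2 /\
     (bounded N v1 -> tracks a0 f0 N c1 x) /\ (bounded N v2 -> tracks a0 f0 N c2 x)) ->
  open_progress Q n.
Proof.
  intros Ht1 Ht2 Hst Ho HQ1 HQ2 Hd1 Hd2 Htr. rewrite Hst in Ho. split.
  - destruct (branch_stat_open _ _ Ho) as [Hs|Hs]; [exists c1 | exists c2];
      repeat split; eauto.
  - intros a0 f0 N x Hx Hpp Hb.
    destruct (Htr a0 f0 N x Hx Hpp) as (v1 & v2 & Hv & Htr1 & Htr2). rewrite Hv in Hb.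
    destruct (branch_open_bounded _ _ _ _ _ Ho Hb) as [[Hs Hb']|[Hs Hb']];
      [exists c1 | exists c2]; repeat split; eauto.
Qed.

Lemma static_linear_progress Q n c p : Tab c -> stat n = stat c -> stat n = Open -> Q c ->
  decomposes p n c -> (forall b y, p <> Dia b y) ->
  (forall x y, gam_uev (rest (Gam n) p) (uev c) x y (uev n x y)) -> open_progress Q n.
Proof.
  intros Ht Hst Ho HQ Hd Hp Hu. apply (open_progress_linear _ _ c p); auto.
  intros a0 f0 N x Hx Hpp Hb. eapply tracks_gam_uev; eauto.
Qed.

Lemma dia_linear_progress Q n c chi y : Tab c -> stat n = stat c -> stat n = Open -> Q c ->
  decomposes chi n c -> leadsto chi y -> Gam c y ->
  (forall x z, pr_uev chi y (rest (Gam n) chi) (uev c) x z (uev n x z)) -> open_progress Q n.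
Proof.
  intros Ht Hst Ho HQ Hd Hl Hy Hu. apply (open_progress_linear _ _ c chi); auto.
  intros a0 f0 N x Hx Hpp Hb. eapply tracks_pr_uev; eauto.
Qed.

Lemma static_branching_progress Q n c1 c2 p : Tab c1 -> Tab c2 ->
  stat n = branch_stat (stat c1) (stat c2) -> stat n = Open -> Q c1 -> Q c2 ->
  decomposes p n c1 -> decomposes p n c2 -> (forall b y, p <> Dia b y) ->
  (forall x y, exists v1 v2,
     gam_uev (rest (Gam n) p) (uev c1) x y v1 /\ gam_uev (rest (Gam n) p) (uev c2) x y v2 /\
     uev n x y = branch_uev (stat c1) (stat c2) v1 v2) ->
  open_progress Q n.
Proof.
  intros Ht1 Ht2 Hst Ho HQ1 HQ2 Hd1 Hd2 Hp Hu.
  apply (open_progress_branching _ _ c1 c2 p); auto.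
  intros a0 f0 N x Hx Hpp. destruct (Hu x (Dia (Star a0) f0)) as (v1 & v2 & U1 & U2 & Hv).
  exists v1, v2; repeat split; auto; intros Hb; eapply tracks_gam_uev; eauto.
Qed.

Lemma dia_choice_progress Q n c1 c2 a1 a2 f : Tab c1 -> Tab c2 ->
  stat n = branch_stat (stat c1) (stat c2) -> stat n = Open -> Q c1 -> Q c2 ->
  decomposes (Dia (Choice a1 a2) f) n c1 -> decomposes (Dia (Choice a1 a2) f) n c2 ->
  Gam c1 (Dia a1 f) -> Gam c2 (Dia a2 f) ->
  (forall x y, exists v1 v2,
     pr_uev (Dia (Choice a1 a2) f) (Dia a1 f) (rest (Gam n) (Dia (Choice a1 a2) f))
       (uev c1) x y v1 /\
     pr_uev (Dia (Choice a1 a2) f) (Dia a2 f) (rest (Gam n) (Dia (Choice a1 a2) f))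
       (uev c2) x y v2 /\
     uev n x y = branch_uev (stat c1) (stat c2) v1 v2) ->
  open_progress Q n.
Proof.
  intros Ht1 Ht2 Hst Ho HQ1 HQ2 Hd1 Hd2 Hy1 Hy2 Hu.
  apply (open_progress_branching _ _ c1 c2 (Dia (Choice a1 a2) f)); auto.
  intros a0 f0 N x Hx Hpp. destruct (Hu x (Dia (Star a0) f0)) as (v1 & v2 & U1 & U2 & Hv).
  exists v1, v2; split; [exact Hv|]; split; intros Hb;
    [apply (tracks_pr_uev _ _ _ n c1 (Dia (Choice a1 a2) f) (Dia a1 f) x v1) |
     apply (tracks_pr_uev _ _ _ n c2 (Dia (Choice a1 a2) f) (Dia a2 f) x v2)]; auto using leadsto.
Qed.

Lemma dia_star_progress Q n c1 c2 a f : Tab c1 -> Tab c2 ->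
  stat n = branch_stat (stat c1) (stat c2) -> stat n = Open -> Q c1 -> Q c2 ->
  decomposes (Dia (Star a) f) n c1 -> decomposes (Dia (Star a) f) n c2 ->
  Gam c1 f -> Gam c2 (Dia a (Dia (Star a) f)) ->
  (forall x y, exists v1 v2,
     star1_uev (Dia (Star a) f) f (rest (Gam n) (Dia (Star a) f)) (uev c1) x y v1 /\
     pr_uev (Dia (Star a) f) (Dia a (Dia (Star a) f)) (rest (Gam n) (Dia (Star a) f))
       (uev c2) x y v2 /\
     uev n x y = branch_uev (stat c1) (stat c2) v1 v2) ->
  open_progress Q n.
Proof.
  intros Ht1 Ht2 Hst Ho HQ1 HQ2 Hd1 Hd2 Hy1 Hy2 Hu.
  apply (open_progress_branching _ _ c1 c2 (Dia (Star a) f)); auto.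
  intros a0 f0 N x Hx Hpp. destruct (Hu x (Dia (Star a0) f0)) as (v1 & v2 & U1 & U2 & Hv).
  exists v1, v2; split; [exact Hv|]; split; intros Hb;
    [apply (tracks_star1_uev _ _ _ n c1 a f x v1) |
     apply (tracks_pr_uev _ _ _ n c2 (Dia (Star a) f) (Dia a (Dia (Star a) f)) x v2)];
    auto using leadsto.
Qed.

Ltac solve_child_sets := unfold add, rest; simpl; intuition (subst; auto).

Lemma open_tableau_ind (Q : node -> Prop) :
  (forall n, stat n <> Open -> Q n) ->
  (forall n kids, saturated n -> existential_rule n kids ->
     (forall a f c, In ((a, f), c) kids -> Q c) -> Q n) ->
  (forall n, stat n = Open -> open_progress Q n -> Q n) ->
  forall n, Tab n -> Q n.
Proof.
  intros Hclosed Hsat Hprog n Ht.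
  induction Ht as [n p _ _ Hst _ | n a f _ _ _ Hst _
    | n c f g Hp _ Hc Ht IH Hst Hu | n c a b f Hp _ Hc Ht IH Hst Hu
    | n c a b f Hp _ Hc Ht IH Hst Hu | n c a f Hp _ Hblocked Hfree Hh _ _ HB Ht IH Hst Hu
    | n c a b f Hp _ Hc Ht IH Hst Hu | n c psi f Hp _ Hc Ht IH Hst Hu
    | n c1 c2 f g Hp _ Hc1 Hc2 Ht1 IH1 Ht2 IH2 Hst Hu
    | n c1 c2 psi f Hp _ Hc1 Hc2 Ht1 IH1 Ht2 IH2 Hst Hu
    | n c1 c2 a1 a2 f Hp _ Hc1 Hc2 Ht1 IH1 Ht2 IH2 Hst Hu
    | n c1 c2 a f Hp _ _ Hc1 Hc2 Ht1 IH1 Ht2 IH2 Hst Hu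
    | n kids Hlit Hcl Hnd Hiff Hkt IHk Hkp Hbad Hopen Hdu];
    (destruct (classic (stat n = Open)) as [Ho|Hno]; [|now apply Hclosed]);
    try congruence.
  11: { apply (Hsat n kids); [repeat split; auto; eapply T_dia; eauto | | exact IHk].
        split; [exact Hcl|]. split; [exact Hiff|]. split; [|auto].
        intros a f c Hk. destruct (Hkp a f c Hk) as (Hg & Hh & _ & _ & HB); eauto. }
  all: apply Hprog; [exact Ho|].
  - apply (static_linear_progress _ _ c (Conj f g)); auto; [|intros ? ? [=]].
    apply (plain_child_decomposes _ _ _ _ Hc Hp); solve_child_sets.
  - apply (static_linear_progress _ _ c (Box (Choice a b) f)); auto; [|intros ? ? [=]].
    apply (plain_child_decomposes _ _ _ _ Hc Hp); solve_child_sets.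
  - apply (static_linear_progress _ _ c (Box (Seq a b) f)); auto; [|intros ? ? [=]].
    apply (plain_child_decomposes _ _ _ _ Hc Hp); solve_child_sets.
  - apply (static_linear_progress _ _ c (Box (Star a) f)); auto; [|intros ? ? [=]].
    now apply boxstar_decomposes.
  - apply (dia_linear_progress _ _ c (Dia (Seq a b) f) (Dia a (Dia b f))); auto using leadsto.
    + apply (dia_child_decomposes _ _ _ _ _ _ Hc Hp); solve_child_sets.
    + apply Hc; solve_child_sets.
  - apply (dia_linear_progress _ _ c (Dia (Test psi) f) f); auto using leadsto.
    + apply (dia_child_decomposes _ _ _ _ _ _ Hc Hp); solve_child_sets.
    + apply Hc; solve_child_sets.
  - apply (static_branching_progress _ _ c1 c2 (Disj f g)); auto; [| |intros ? ? [=]];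
      [apply (plain_child_decomposes _ _ _ _ Hc1 Hp) |
       apply (plain_child_decomposes _ _ _ _ Hc2 Hp)];
      solve_child_sets.
  - apply (static_branching_progress _ _ c1 c2 (Box (Test psi) f)); auto; [| |intros ? ? [=]];
      [apply (plain_child_decomposes _ _ _ _ Hc1 Hp) |
       apply (plain_child_decomposes _ _ _ _ Hc2 Hp)];
      solve_child_sets.
  - apply (dia_choice_progress _ _ c1 c2 a1 a2 f); auto;
      [apply (dia_child_decomposes _ _ _ _ _ _ Hc1 Hp) |
       apply (dia_child_decomposes _ _ _ _ _ _ Hc2 Hp)
      | apply Hc1 | apply Hc2]; solve_child_sets.
  - apply (dia_star_progress _ _ c1 c2 a f); auto;
      [apply (dia_child_decomposes _ _ _ _ _ _ Hc1 Hp) |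
       apply (dia_child_decomposes _ _ _ _ _ _ Hc2 Hp)
      | apply Hc1 | apply Hc2]; solve_child_sets.
Qed.

Definition extends_good (pre : list node) (c : node) : Prop :=
  forall l e, branch c l e -> good_branch (pre ++ l).

Definition on_world (w : world) (pre : list node) (c : node) : Prop :=
  exists l e, proj1_sig w = pre ++ l /\ branch c l e.

Lemma extends_good_step pre n c : extends_good pre n -> rule_step n c ->
  extends_good (pre ++ [n]) c.
Proof.
  intros Hpre Hs l e Hb. rewrite <- app_assoc. apply (Hpre _ e). econstructor; eauto.
Qed.

Lemma on_world_step w pre n c : rule_step n c -> on_world w (pre ++ [n]) c -> on_world w pre n.
Proof.
  intros Hs (l & e & Hw & Hb). exists (n :: l), e. split.
  - rewrite Hw, <- app_assoc; reflexivity.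
  - econstructor; eauto.
Qed.

Lemma on_world_label w pre c x : on_world w pre c -> Gam c x -> label w x.
Proof.
  intros (l & e & Hw & Hb) Hx. exists c; split; auto.
  rewrite Hw; apply in_or_app; right; eapply branch_head; eauto.
Qed.

Lemma world_of_branch pre c l e : extends_good pre c -> branch c l e ->
  exists w, on_world w pre c.
Proof. intros Hpre Hb. exists (exist _ (pre ++ l) (Hpre l e Hb)), l, e; auto. Qed.

Lemma open_branch c : Tab c -> stat c = Open -> exists l e, branch c l e.
Proof.
  revert c; apply (open_tableau_ind (fun c => stat c = Open -> exists l e, branch c l e)).
  - intros n Hno Ho; contradiction.
  - intros n kids Hsat _ _ _. exists [n], n; now constructor.
  - intros n _ [(c & Hs & HQ) _] _. pose proof Hs as (_ & Hoc & _).
    destruct (HQ Hoc) as (l & e & Hb). exists (n :: l), e; econstructor; eauto.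
Qed.

Lemma open_world pre c : extends_good pre c -> Tab c -> stat c = Open ->
  exists w, on_world w pre c.
Proof.
  intros Hpre Ht Ho. destruct (open_branch c Ht Ho) as (l & e & Hb).
  eapply world_of_branch; eauto.
Qed.

Lemma seed_extends_good c : seed c -> extends_good [] c.
Proof. intros (_ & _ & HB & Hh) l e Hb. exists c, e; auto. Qed.

Lemma seed_world c : seed c -> exists w, forall g, Gam c g -> label w g.
Proof.
  intros Hc. pose proof Hc as (Ht & Ho & _).
  destruct (open_world [] c (seed_extends_good c Hc) Ht Ho) as (w & Hw).
  exists w; intros g Hg; eapply on_world_label; eauto.
Qed.

Lemma world_last (w : world) pre e : proj1_sig w = pre ++ [e] ->
  hcr_sound (HCr e) /\ forall g, label w g -> lit_or_modal g -> Gam e g.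
Proof.
  intros Hw. destruct (proj2_sig w) as (n0 & e' & Hb & _ & Hh).
  destruct (branch_last _ _ _ Hb) as (l0 & Hl0).
  rewrite Hw in Hl0. apply app_inj_tail in Hl0 as [_ <-].
  split; [now rewrite (branch_HCr _ _ _ Hb)|].
  intros g; eapply label_lit_or_modal_last; eauto.
Qed.

Lemma world_last_node (w : world) : exists e, saturated e /\ hcr_sound (HCr e) /\
  forall g, label w g -> lit_or_modal g -> Gam e g.
Proof.
  destruct (proj2_sig w) as (n0 & e & Hb & _ & _).
  destruct (branch_last _ _ _ Hb) as (l0 & Hl0).
  exists e; split; [eapply branch_saturated; eauto | eapply world_last; eauto].
Qed.

Lemma world_at_saturated pre n : saturated n -> extends_good pre n ->
  exists w, on_world w pre n /\ forall g, label w g -> lit_or_modal g -> Gam n g.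
Proof.
  intros Hsat Hpre.
  destruct (world_of_branch pre n [n] n Hpre (branch_end _ Hsat)) as (w & Hw).
  exists w; split; auto.
  destruct Hw as (l & e & Hw & Hb). destruct (branch_from_saturated _ _ _ Hsat Hb) as [-> ->].
  eapply world_last; eauto.
Qed.

Lemma label_successor (w : world) a f : label w (Dia (AP a) f) ->
  exists w', acc a w w' /\ label w' f.
Proof.
  intros Hx. destruct (world_last_node w) as (e & Hsat & Hh & Hlast).
  destruct (saturated_successor_seed e a f Hsat Hh (Hlast _ Hx I)) as (k & Hk & Hsucc).
  destruct (seed_world k Hk) as (w' & Hw').
  exists w'; split.
  - intros g Hg. apply Hw', Hsucc. right; exact (Hlast _ Hg I).
  - apply Hw', Hsucc. left; reflexivity.
Qed.

(** * Fulfilling chains *)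

Inductive reach (f : fml) : world -> fml -> Prop :=
| reach_here w : label w f -> reach f w f
| reach_atomic w w' b chi : label w (Dia (AP b) chi) -> Dia (AP b) chi <> f ->
    ppre f (Dia (AP b) chi) -> acc b w w' -> reach f w' chi -> reach f w (Dia (AP b) chi)
| reach_leadsto w x y : label w x -> x <> f -> ppre f x -> leadsto x y -> reach f w y ->
    reach f w x.

Definition chain_from (f : fml) (w : world) (x : fml) : Prop :=
  exists len (ws : nat -> world) (ps : nat -> fml),
    (forall i, i <= len -> ppre f (ps i) /\ label (ws i) (ps i)) /\
    ws 0 = w /\ ps 0 = x /\ ps len = f /\
    (forall i, i < len -> ps i <> f) /\
    (forall i, i < len ->
       match ps i with
       | Dia (AP a) chi => ps (S i) = chi /\ acc a (ws i) (ws (S i))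
       | _ => leadsto (ps i) (ps (S i)) /\ ws i = ws (S i)
       end).

Lemma chain_from_here f w : label w f -> chain_from f w f.
Proof.
  intros Hf. exists 0, (fun _ => w), (fun _ => f).
  refine (conj _ (conj eq_refl (conj eq_refl (conj eq_refl (conj _ _)))));
    intros i Hi; [split; auto using ppre | lia | lia].
Qed.

Lemma chain_from_cons f w w' x y : label w x -> x <> f -> ppre f x ->
  match x with
  | Dia (AP a) chi => y = chi /\ acc a w w'
  | _ => leadsto x y /\ w = w'
  end ->
  chain_from f w' y -> chain_from f w x.
Proof.
  intros Hx Hne Hpp Hstep (len & ws & ps & K1 & K2 & K3 & K4 & K5 & K6).
  exists (S len), (fun i => match i with 0 => w | S k => ws k end),
    (fun i => match i with 0 => x | S k => ps k end).
  refine (conj _ (conj eq_refl (conj eq_refl (conj K4 (conj _ _))))).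
  - intros [|i] Hi; [auto | apply K1; lia].
  - intros [|i] Hi; [auto | apply K5; lia].
  - intros [|i] Hi; [|apply (K6 i); lia]. rewrite <- K2, <- K3 in Hstep; exact Hstep.
Qed.

Lemma reach_chain f w x : reach f w x -> chain_from f w x.
Proof.
  induction 1 as [w Hf | w w' b chi Hx Hne Hpp Hacc _ IH | w x y Hx Hne Hpp Hxy _ IH].
  - now apply chain_from_here.
  - apply (chain_from_cons _ _ w' _ chi); auto.
  - apply (chain_from_cons _ _ w _ y); auto. destruct Hxy; split; auto using leadsto.
Qed.

Lemma expanded_in_Dia_leadsto G b q z : expanded_in G b (Dia q z) ->
  exists y, G y /\ leadsto (Dia q z) y.
Proof. destruct q; simpl; intros Hexp; try tauto; firstorder eauto using leadsto. Qed.

(** * Eventualities *)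

Definition fulfils (a0 : prg) (f0 : fml) (N : nat) (c : node) : Prop :=
  stat c = Open -> hcr_sound (HCr c) -> forall x pre, extends_good pre c -> Gam c x ->
  ppre (Dia (Star a0) f0) x -> bounded N (uev c x (Dia (Star a0) f0)) ->
  exists w, on_world w pre c /\ reach f0 w x.

Lemma fulfils_progress a0 f0 N n : open_progress (fulfils a0 f0 N) n -> fulfils a0 f0 N n.
Proof.
  intros [_ Hprog] Ho Hh x pre Hpre Hx Hpp Hb.
  destruct (Hprog a0 f0 N x Hx Hpp Hb) as (c & Hs & HQ & Htr).
  pose proof Hs as (Htc & Hoc & p & Hhc & _).
  assert (Hpre' : extends_good (pre ++ [n]) c) by now apply extends_good_step.
  assert (Hhc' : hcr_sound (HCr c)) by now rewrite Hhc.
  assert (Hxw : forall w, on_world w (pre ++ [n]) c -> on_world w pre n /\ label w x).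
  { intros w Hw. pose proof (on_world_step _ _ _ _ Hs Hw) as Hwn.
    split; [exact Hwn | exact (on_world_label _ _ _ _ Hwn Hx)]. }
  destruct (ppre_Star_body _ _ _ Hpp) as [Hpf Hxf].
  destruct Htr as [(Hcx & Hbc) | (y & Hxy & Hy & [-> | (Hpy & Hby)])].
  - destruct (HQ Hoc Hhc' x _ Hpre' Hcx Hpp Hbc) as (w & Hw & Hr).
    exists w; split; [exact (proj1 (Hxw w Hw)) | exact Hr].
  - destruct (open_world _ _ Hpre' Htc Hoc) as (w & Hw).
    destruct (Hxw w Hw) as [Hwn Hxl].
    exists w; split; [exact Hwn|].
    apply (reach_leadsto _ _ _ f0); auto.
    constructor; exact (on_world_label _ _ _ _ Hw Hy).
  - destruct (HQ Hoc Hhc' y _ Hpre' Hy Hpy Hby) as (w & Hw & Hr).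
    destruct (Hxw w Hw) as [Hwn Hxl].
    exists w; split; [exact Hwn|].
    apply (reach_leadsto _ _ _ y); auto.
Qed.

Lemma saturated_successor_fulfils a0 f0 N n kids b chi : saturated n ->
  existential_rule n kids -> hcr_sound (HCr n) -> Gam n (Dia (AP b) chi) ->
  ppre (Dia (Star a0) f0) (Dia (AP b) chi) ->
  bounded N (uev n (Dia (AP b) chi) (Dia (Star a0) f0)) ->
  (forall a f c, In ((a, f), c) kids -> fulfils a0 f0 N c) ->
  (forall j, j < N -> forall c, Tab c -> fulfils a0 f0 j c) ->
  exists k M, seed k /\ (forall g, succ_set n b chi g -> Gam k g) /\
    fulfils a0 f0 M k /\ bounded M (uev k chi (Dia (Star a0) f0)).
Proof.
  intros (_ & Ho & _) Hr Hh Hx Hpp Hb Hkids Hbelow.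
  pose proof Hr as (_ & _ & _ & _ & Hdu).
  destruct (proj1 (Hdu (Dia (AP b) chi) (Dia (Star a0) f0)) Ho eq_refl Hpp) as [Hkid Hhist].
  destruct (existential_successor _ _ _ _ Hr Hx) as [(k & Hk)|Hin].
  - destruct (open_existential_kid_seed _ _ _ _ _ Ho Hr Hh Hk) as [Hseed Hg].
    exists k, N. split; [exact Hseed|]. split; [intros g; apply Hg|]. split; [eauto|].
    rewrite <- (Hkid _ _ _ Hk eq_refl); exact Hb.
  - destruct (Hhist b chi Hx Hin eq_refl) as (j & e0 & Hj & Hfe & Hse & Hu).
    destruct (hcr_sound_seed _ _ _ Hh Hj) as (c & Hseed & Hg & Hbj).
    exists c, j. split; [exact Hseed|]. split; [intros g Hg'; apply Hg, Hse, Hg'|].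
    split; [apply Hbelow; [apply Hb, Hu | apply Hseed]|].
    destruct (ppre_Dia_inv _ _ _ Hpp) as [E|Hpc]; [discriminate|].
    rewrite <- Hfe; apply Hbj; [reflexivity | now rewrite Hfe].
Qed.

Lemma fulfils_saturated a0 f0 N n kids : saturated n -> existential_rule n kids ->
  (forall a f c, In ((a, f), c) kids -> fulfils a0 f0 N c) ->
  (forall j, j < N -> forall c, Tab c -> fulfils a0 f0 j c) ->
  fulfils a0 f0 N n.
Proof.
  intros Hsat Hr Hkids Hbelow _ Hh x pre Hpre Hx Hpp Hb.
  pose proof Hsat as (_ & _ & Hlit).
  destruct (ppre_Star_lit_or_modal _ _ _ Hpp (Hlit _ Hx)) as (b & chi & -> & Hpc).
  destruct (world_at_saturated _ _ Hsat Hpre) as (w & Hw & Hlast).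
  destruct (saturated_successor_fulfils a0 f0 N n kids b chi)
    as (k & M & Hk & Hsucc & HQ & HbM); auto.
  pose proof Hk as (_ & Hok & _ & Hhk).
  destruct (HQ Hok Hhk chi [] (seed_extends_good k Hk) (Hsucc chi (or_introl eq_refl)) Hpc HbM)
    as (w' & Hw' & Hr').
  destruct (ppre_Star_body _ _ _ Hpp) as [Hpf Hxf].
  exists w; split; [exact Hw|].
  apply (reach_atomic _ _ w'); [exact (on_world_label _ _ _ _ Hw Hx) | exact Hxf | exact Hpf
    | | exact Hr'].
  intros g Hg. apply (on_world_label _ _ _ _ Hw'), Hsucc. right; exact (Hlast _ Hg I).
Qed.

Lemma Tab_fulfils a0 f0 N c : Tab c -> fulfils a0 f0 N c.
Proof.
  revert c. induction N as [N IH] using (well_founded_induction lt_wf).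
  apply (open_tableau_ind (fulfils a0 f0 N)).
  - intros n Hno Ho; contradiction.
  - intros n kids Hsat Hr Hkids. apply (fulfils_saturated _ _ _ _ kids); auto.
  - intros n _. apply fulfils_progress.
Qed.

Lemma reach_along_branch a0 f0 m l e : branch m l e -> forall (w : world) pre,
  proj1_sig w = pre ++ l -> forall x, Gam m x -> ppre (Dia (Star a0) f0) x -> reach f0 w x.
Proof.
  induction 1 as [e He | n c l e Hs Hb IH]; intros w pre Hw x Hx Hpp.
  - pose proof He as (Ht & Ho & _).
    destruct (world_last w pre e Hw) as [Hh _].
    assert (Hpre : extends_good pre e).
    { intros l e' Hb. destruct (branch_from_saturated _ _ _ He Hb) as [-> _].
      rewrite <- Hw. exact (proj2_sig w). }
    destruct (Tab_fulfils a0 f0 _ e Ht Ho Hh x pre Hpre Hx Hpp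
                (saturated_uev_bound _ _ _ _ He Hx Hpp)) as (w' & (l & e' & Hw' & Hb) & Hr).
    destruct (branch_from_saturated _ _ _ He Hb) as [-> _].
    replace w with w'; [exact Hr | apply world_eq; congruence].
  - assert (Hw' : proj1_sig w = (pre ++ [n]) ++ l) by (rewrite Hw, <- app_assoc; reflexivity).
    assert (Hlab : forall k g, In k (n :: l) -> Gam k g -> label w g)
      by (intros k g Hk Hg; exists k; split; auto; rewrite Hw; apply in_or_app; auto).
    destruct Hs as (_ & _ & p & _ & _ & Hexp & Hrest & _).
    destruct (classic (x = p)) as [->|Hne]; [|exact (IH w _ Hw' x (Hrest x Hx Hne) Hpp)].
    destruct (ppre_Dia_shape _ _ _ Hpp) as (q & z & ->).
    destruct (expanded_in_Dia_leadsto _ _ _ _ Hexp) as (y & Hy & Hxy).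
    destruct (ppre_Star_body _ _ _ Hpp) as [Hpf Hxf].
    apply (reach_leadsto _ _ _ y); auto.
    + apply (Hlab n); simpl; auto.
    + destruct (ppre_leadsto _ _ _ _ Hpp Hxy) as [Hpy | ->]; [now apply (IH w _ Hw')|].
      constructor. apply (Hlab c); [right; eapply branch_head; eauto | exact Hy].
Qed.

Lemma label_fulfilling (w : world) a f : label w (Dia (Star a) f) ->
  fulfilling_chain acc label f (Star a) w.
Proof.
  intros (m & Hm & Hx).
  destruct (proj2_sig w) as (n0 & e & Hb & _ & _).
  destruct (branch_suffix _ _ _ Hb m Hm) as (pre & l & Hw & Hb').
  apply reach_chain. exact (reach_along_branch a f _ _ _ Hb' w pre Hw _ Hx (ppre_base _)).
Qed.

Lemma acc_label_hintikka : hintikka acc label.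
Proof.
  intros w. destruct (world_last_node w) as (e & Hsat & _ & Hlast).
  repeat match goal with |- _ /\ _ => split end;
    try (intros * Hg; apply label_expanded in Hg; [simpl in Hg; tauto | simpl; tauto]).
  - intros p Hn Hp. destruct (saturated_existential_rule e Hsat) as (kids & Hcl & _).
    apply (Hcl p); split; [exact (Hlast _ Hp I) | exact (Hlast _ Hn I)].
  - intros a f Hx. now apply label_successor.
  - intros a f Hx v Hacc. now apply Hacc.
  - intros a f Hx. now apply label_fulfilling.
Qed.

Theorem theorem4p7 (phi : fml) (r : node) :
  is_nnf phi ->
  Tab r ->
  seteq (Gam r) (fun x => x = phi) ->
  HCr r = nil ->
  Nx r = None ->
  seteq (BD r) emptyset ->
  seteq (BB r) emptyset ->
  stat r = Open ->
  hintikka_structure_for phi.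
Proof.
  intros _ Ht Hg Hh _ _ HB Ho.
  assert (Hseed : seed r).
  { split; [exact Ht|]. split; [exact Ho|]. split.
    - intros g Hgg. now apply HB in Hgg.
    - rewrite Hh. exact hcr_sound_nil. }
  destruct (seed_world r Hseed) as (w & Hw).
  exists world, acc, label. split; [exists w; now apply Hw, Hg | exact acc_label_hintikka].
Qed.
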